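(* Run the mechanism BFM-SWM described in the context with arbitrary $B>0$, $\alpha>1$, $\beta>1$, $\epsilon>0$, $\ell\in\{1,2\}$, with all sellers behaving truthfully. Then $$\sum_{i=1}^{\ell}\sum_{t=1}^{M}v(S_{i,t})\ \le\ \frac{2\ell\cdot\alpha\big(v(S^* )-p(S^* )\big)}{(\alpha-1)(1-1/\beta)}.$$
   Context: Setting. $\mathcal{N}$ is a finite set of $n$ sellers. The valuation $v:2^{\mathcal{N}}\to\mathbb{R}_{\ge 0}$ satisfies $v(\emptyset)=0$ and is submodular (for $X\subseteq Y\subseteq\mathcal{N}$ and $u\notin Y$, $v(u\mid Y)\le v(u\mid X)$), not necessarily monotone, where $v(S\mid T)=v(S\cup T)-v(T)$, $v(u\mid T)=v(\{u\}\mid T)$. Each seller $u$ has a private cost $c(u)\ge 0$; $c(X)=\sum_{u\in X}c(u)$, $p(X)=\sum_{u\in X}p(u)$. $B>0$ is the budget, $[\ell]=\{1,\dots,\ell\}$. Sellers behave truthfully: a seller $u$ offered price $q$ accepts iff $c(u)\le q$. Mechanism BFM-SWM (inputs $B$, $\alpha>1$, $\beta>1$, $\epsilon>0$, $\ell\in\{1,2\}$): 1. Offer every seller the price $B$; let $R$ be the set of sellers who accept, and set $p(u)=B$ for $u\in R$. 2. Set $t=0$, $\rho_0=\epsilon/\alpha$, $u^*=\emptyset$ ($u^*$ is a set of at most one seller), and $S_{i,0}=\emptyset$ for $i\in[\ell]$. 3. Repeat rounds: set $t\leftarrow t+1$, $\rho_t=\alpha\rho_{t-1}$, $S_{i,t}=\emptyset$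 for all $i\in[\ell]$. Process the sellers $u\in R\setminus(\bigcup_{i=1}^{\ell}S_{i,t-1}\cup u^* )$ one at a time in a fixed order. For each such $u$: pick $j\in\arg\max_{i\in[\ell]}v(u\mid S_{i,t})$ (current contents); update $p(u)\leftarrow\min\{p(u),\ v(u\mid S_{j,t})/(\beta+\rho_t/B)\}$ and offer $p(u)$ to $u$. If $u$ accepts: if $v(S_{j,t}\cup\{u\})-p(S_{j,t}\cup\{u\})>\rho_t$ (current prices), set $u^*\leftarrow\{u\}$ and end the round immediately; otherwise add $u$ to $S_{j,t}$. If $u$ rejects, remove $u$ from $R$. After the round, stop if $R\setminus\left(\bigcup_{i=1}^{\ell}(S_{i,t-1}\cup S_{i,t})\cup u^*\right)=\emptyset$; otherwise start another round. 4. Let $M$ be the final value of $t$. Output $S^*\in\arg\max_{A\in\{S_{i,t}: i\in[\ell],\ t\in\{M-1,M\}\}\cup\{u^*\}}\big(v(A)-p(A)\big)$, paying each $u\in S^*$ its current price $p(u)$; $p(S^* )$ is the total payment. Notation: $S_{i,t}$ denotes the contents of that candidate set at the end of round $t$. *)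

From mathcomp Require Import all_boot all_order all_algebra.
Set Implicit Arguments. Unset Strict Implicit. Unset Printing Implicit Defensive.
Import Order.TTheory GRing.Theory Num.Theory.
Local Open Scope ring_scope.

Section BFM.
Variables (R : realFieldType) (N : finType) (ell : nat).

Definition marg (v : {set N} -> R) (u : N) (S : {set N}) : R := v (u |: S) - v S.

Definition submodular (v : {set N} -> R) : Prop :=
  forall (X Y : {set N}) (u : N), X \subset Y -> u \notin Y ->
    marg v u Y <= marg v u X.

Definition psum (p : N -> R) (A : {set N}) : R := \sum_(x in A) p x.

Definition rho (alpha eps : R) (t : nat) : R := eps / alpha * alpha ^+ t.

(* global state between rounds: R, prices, u*, candidate sets S_{i,t} of the
   last completed round *)
Record mstate := MState
  { mR : {set N}; mp : N -> R; mu : {set N}; mS : 'I_ell -> {set N} }.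

(* state inside a round; rstop = the round has been ended early *)
Record rstate := RState
  { rR : {set N}; rp : N -> R; ru : {set N}; rS : 'I_ell -> {set N}; rstop : bool }.

Variables (v : {set N} -> R) (c : N -> R) (B alpha beta eps : R) (ord : seq N).
(* tie-breaking: tb t u S is the index j in argmax_i v(u | S i) chosen when
   seller u is processed in round t with current candidate sets S *)
Variable tb : nat -> N -> ('I_ell -> {set N}) -> 'I_ell.

Definition step (t : nat) (s : rstate) (u : N) : rstate :=
  if rstop s then s else
  let j := tb t u (rS s) in
  let q := Num.min (rp s u) (marg v u (rS s j) / (beta + rho alpha eps t / B)) in
  let p' := fun x => if x == u then q else rp s x in
  if c u <= q then
    if rho alpha eps t < v (u |: rS s j) - psum p' (u |: rS s j)
    then RState (rR s) p' [set u] (rS s) true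
    else RState (rR s) p' (ru s) (fun i => if i == j then u |: rS s i else rS s i) false
  else
    RState (rR s :\ u) p' (ru s) (rS s) false.

Definition round (t : nat) (s : mstate) : mstate :=
  let L := [seq u <- ord | u \in mR s :\: ((\bigcup_(i < ell) mS s i) :|: mu s)] in
  let r := foldl (step t) (RState (mR s) (mp s) (mu s) (fun _ => set0) false) L in
  MState (rR r) (rp r) (ru r) (rS r).

(* steps 1-2: offer B to everybody; R = acceptors; prices B; u* = S_{i,0} = empty *)
Definition init : mstate :=
  MState [set u | c u <= B] (fun _ => B) set0 (fun _ => set0).

Fixpoint run (t : nat) : mstate :=
  if t is t'.+1 then round t (run t') else init.

Definition Sets (t : nat) (i : 'I_ell) : {set N} := mS (run t) i.

Definition stops (t : nat) : bool :=
  mR (run t) :\: ((\bigcup_(i < ell) (Sets t.-1 i :|: Sets t i)) :|: mu (run t)) == set0.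

Definition candidate (M : nat) (A : {set N}) : Prop :=
  (exists i : 'I_ell, A = Sets M.-1 i \/ A = Sets M i) \/ A = mu (run M).

Definition util (M : nat) (A : {set N}) : R := v A - psum (mp (run M)) A.

End BFM.

(** A candidate set [S_{i,t}] built in round [t] has surplus [v - p] at most
    [rho_t], or the round would have ended there, and it pays at most a
    [1/beta] share of its value, since every accepted price is at most a [1/beta]
    share of the seller's marginal value.  Hence [(1 - 1/beta) v(S_{i,t})] is
    bounded both by [rho_t] and, prices only falling, by the final surplus of
    [S_{i,t}].  The rounds before [M - 1] contribute at most
    [sum_(t < M-1) rho_t <= rho_{M-1} / (alpha - 1)], and for [M >= 2]
    [rho_{M-1}] is at most twice the optimal surplus: one of the last two
    rounds ended early with a seller [u] for which [u |: S_{j,t}] has surplus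
    above [rho_t], and submodularity splits that surplus between the
    candidates [[set u]] and [S_{j,t}].  The sets of the last two rounds are candidates themselves. *)

From mathcomp Require Import all_boot all_order all_algebra.
From mathcomp Require Import ring lra.
Import Order.TTheory GRing.Theory Num.Theory.
Local Open Scope ring_scope.
Set Implicit Arguments. Unset Strict Implicit. Unset Printing Implicit Defensive.

Section Arithmetic.
Variable R : realFieldType.

Lemma ler_mul_of_le_divD (b r q m : R) : 0 < b -> 0 <= r -> 0 <= q ->
  q <= m / (b + r) -> b * q <= m.
Proof.
move=> b_gt0 r_ge0 q_ge0; rewrite ler_pdivlMr ?ltr_wpDr // => /(le_trans _); apply.
by rewrite mulrC ler_wpM2l // lerDl.
Qed.

Lemma onem_invf_mulr_le (b p V : R) : 0 < b -> b * p <= V -> (1 - b^-1) * V <= V - p.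
Proof.
move=> b_gt0; rewrite -ler_pdivlMl // => pV.
by rewrite mulrBl mul1r lerB // mulrC.
Qed.

Lemma sumr_nat1_last2 (f : nat -> R) M : (0 < M)%N -> f 0%N = 0 ->
  \sum_(1 <= t < M.+1) f t = \sum_(0 <= t < M.-1) f t + f M.-1 + f M.
Proof.
case: M => // m _ f0 /=.
by rewrite big_nat_recr // -(big_nat_recr m 0) // (@big_ltn _ _ _ 0) // f0 /= add0r.
Qed.

Variables alpha eps : R.

Lemma rhoS t : rho alpha eps t.+1 = alpha * rho alpha eps t.
Proof. by rewrite /rho exprS; ring. Qed.

Lemma rho_gt0 t : 1 < alpha -> 0 < eps -> 0 < rho alpha eps t.
Proof.
move=> alpha_gt1 eps_gt0; have alpha_gt0 : 0 < alpha by lra.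
by rewrite /rho !mulr_gt0 ?invr_gt0 ?exprn_gt0.
Qed.

Lemma rho_telescope m :
  (alpha - 1) * \sum_(0 <= t < m) rho alpha eps t = rho alpha eps m - rho alpha eps 0.
Proof.
rewrite mulr_sumr -telescope_sumr //; apply: eq_bigr => t _.
by rewrite rhoS; ring.
Qed.

End Arithmetic.

Section Mechanism.
Variables (R : realFieldType) (N : finType) (ell : nat).
Variables (v : {set N} -> R) (c : N -> R) (B alpha beta eps : R) (ord : seq N).
Variable tb : nat -> N -> ('I_ell -> {set N}) -> 'I_ell.
Hypotheses (v0 : v set0 = 0) (v_ge0 : forall A, 0 <= v A) (v_submod : submodular v)
  (c_ge0 : forall u, 0 <= c u) (B_gt0 : 0 < B) (alpha_gt1 : 1 < alpha)
  (beta_gt1 : 1 < beta) (eps_gt0 : 0 < eps) (ord_enum : perm_eq ord (enum N)).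

Implicit Types (p : N -> R) (S A : {set N}) (u x : N) (q : R) (t : nat).

Local Notation rho := (rho alpha eps).
Local Notation step := (step v c B alpha beta eps tb).
Local Notation run := (run v c B alpha beta eps ord tb).
Local Notation Sets := (Sets v c B alpha beta eps ord tb).
Local Notation stops := (stops v c B alpha beta eps ord tb).
Local Notation candidate := (candidate v c B alpha beta eps ord tb).
Local Notation util := (util v c B alpha beta eps ord tb).

Let beta_gt0 : 0 < beta. Proof. exact: lt_trans ltr01 beta_gt1. Qed.
Let rho_pos t : 0 < rho t. Proof. exact: rho_gt0. Qed.
Let onem_invbeta_gt0 : 0 < 1 - beta^-1.
Proof. by rewrite subr_gt0 invf_lt1. Qed.
Let alpha_pred_ge0 : 0 <= alpha - 1.
Proof. by rewrite subr_ge0 ltW. Qed.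

Definition surplus (p : N -> R) (A : {set N}) : R := v A - psum p A.

Lemma surplus_setU1_le p u S : u \notin S ->
  surplus p (u |: S) <= surplus p [set u] + surplus p S.
Proof.
move=> uS; rewrite /surplus /psum big_setU1 //= big_set1.
by have := v_submod (sub0set S) uS; rewrite /marg setU0 v0; lra.
Qed.

Definition reprice (p : N -> R) u q : N -> R := fun x => if x == u then q else p x.

Lemma psum_reprice_notin p u q S : u \notin S -> psum (reprice p u q) S = psum p S.
Proof.
move=> uS; apply: eq_bigr => x xS; rewrite /reprice.
by case: eqP => // xu; rewrite -xu xS in uS.
Qed.

Lemma psum_reprice_setU1 p u q S : u \notin S ->
  psum (reprice p u q) (u |: S) = q + psum p S.
Proof.
by move=> uS; rewrite /psum big_setU1 //= {1}/reprice eqxx; congr (_ + _);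
  apply: psum_reprice_notin.
Qed.

Definition admissible t p S := surplus p S <= rho t /\ beta * psum p S <= v S.

Lemma admissible_set0 t p : admissible t p set0.
Proof. by rewrite /admissible /surplus /psum big_set0 v0 mulr0 subr0 (ltW (rho_pos t)). Qed.

Lemma admissible_reprice t p u q S : u \notin S ->
  admissible t p S -> admissible t (reprice p u q) S.
Proof. by move=> uS; rewrite /admissible /surplus psum_reprice_notin. Qed.

Lemma admissible_setU1 t p u q S : u \notin S -> admissible t p S ->
  beta * q <= marg v u S -> surplus (reprice p u q) (u |: S) <= rho t ->
  admissible t (reprice p u q) (u |: S).
Proof.
move=> uS [_ share] qS; split=> //.
by rewrite psum_reprice_setU1 // mulrDr; move: qS; rewrite /marg; lra.
Qed.

Definition early_exit t p (ustar : {set N}) (S : 'I_ell -> {set N}) : Prop :=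
  exists u j, [/\ ustar = [set u], u \notin S j & rho t < surplus p (u |: S j)].

Definition offer t (s : rstate R N ell) u : R :=
  Num.min (rp s u) (marg v u (rS s (tb t u (rS s))) / (beta + rho t / B)).

Lemma offer_le_price t s u : offer t s u <= rp s u.
Proof. by rewrite ge_min lexx. Qed.

Lemma share_offer_le t s u : c u <= offer t s u ->
  beta * offer t s u <= marg v u (rS s (tb t u (rS s))).
Proof.
move=> accept.
apply: (ler_mul_of_le_divD (r := rho t / B) beta_gt0 _ (le_trans (c_ge0 u) accept)).
  by rewrite divr_ge0 // ltW.
by rewrite ge_min lexx orbT.
Qed.

Lemma step_running t s u : ~~ rstop s ->
  step t s u =
    let j := tb t u (rS s) in
    let p' := reprice (rp s) u (offer t s u) in
    if c u <= offer t s u then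
      if rho t < surplus p' (u |: rS s j) then RState (rR s) p' [set u] (rS s) true
      else RState (rR s) p' (ru s) (fun i => if i == j then u |: rS s i else rS s i) false
    else RState (rR s :\ u) p' (ru s) (rS s) false.
Proof. by rewrite /step => /negbTE ->. Qed.

Lemma step_price_le t s u x : rp (step t s u) x <= rp s x.
Proof.
have [stopped|running] := boolP (rstop s); first by rewrite /step stopped.
have le_p : reprice (rp s) u (offer t s u) x <= rp s x.
  by rewrite /reprice; case: eqP => [->|_]; rewrite ?offer_le_price.
by rewrite step_running //=; case: ifP => _; first case: ifP.
Qed.

Lemma foldl_step_price_le t s L x : rp (foldl (step t) s L) x <= rp s x.
Proof.
elim: L s => [|u L IH] s //=.
exact: le_trans (IH _) (step_price_le _ _ _ _).
Qed.

Lemma run_price_le t x : mp (run t.+1) x <= mp (run t) x.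
Proof. exact: foldl_step_price_le. Qed.

Lemma surplus_run_le t M A : (t <= M)%N ->
  surplus (mp (run t)) A <= surplus (mp (run M)) A.
Proof.
move/subnKC <-; elim: (M - t)%N => [|k IH]; rewrite ?addn0 // addnS.
apply: le_trans IH _; rewrite lerD2l lerN2.
by apply: ler_sum => x _; apply: run_price_le.
Qed.

Record round_inv t (ustar E : {set N}) (s : rstate R N ell) (rest : seq N) : Prop :=
  RoundInv {
    rest_fresh : forall i x, x \in rest -> x \notin rS s i;
    sets_admissible : forall i, admissible t (rp s) (rS s i);
    stopped_early_exit : rstop s -> early_exit t (rp s) (ru s) (rS s);
    running_covered : ~~ rstop s ->
      ru s = ustar /\ {subset rR s <= [predU rest & (\bigcup_(i < ell) rS s i) :|: E]}
  }.

Lemma round_inv_step t (ustar E : {set N}) (s : rstate R N ell) u rest : uniq (u :: rest) ->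
  round_inv t ustar E s (u :: rest) -> round_inv t ustar E (step t s u) rest.
Proof.
case/andP=> u_rest _ [fresh adm early cov].
have fresh_u i : u \notin rS s i by apply: fresh; rewrite mem_head.
have fresh_rest i x : x \in rest -> x \notin rS s i.
  by move=> x_rest; apply: fresh; rewrite inE x_rest orbT.
have [stopped|running] := boolP (rstop s).
  by rewrite /step stopped; split=> //; rewrite stopped.
have [ustarE cover] := cov running.
have cover_rest x : x \in rR s -> x != u ->
    (x \in rest) || (x \in (\bigcup_(i < ell) rS s i) :|: E).
  by move=> /cover; rewrite !inE => /orP[/orP[/eqP->|->]|->]; rewrite ?eqxx ?orbT.
rewrite step_running //=.
set j := tb t u (rS s); set q := offer t s u; set p' := reprice (rp s) u q.
have adm' i : admissible t p' (rS s i) by apply: admissible_reprice.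
case: ifP => [accept|_]; last first.
  split=> // _; split=> // x /setD1P[x_u x_R].
  by rewrite inE; apply: cover_rest.
case: ifP => [exit|keep]; first by split=> //= _; exists u, j.
set S' := fun i => if i == j then u |: rS s i else rS s i.
have S'_sub i : rS s i \subset S' i by rewrite /S'; case: eqP => _; rewrite ?subsetUr.
have cup_sub : \bigcup_(i < ell) rS s i \subset \bigcup_(i < ell) S' i.
  by apply/bigcupsP => i _; apply: subset_trans (S'_sub i) (bigcup_sup i isT).
split=> //= [i x x_rest | i | _].
- rewrite /S'; case: eqP => _; last exact: fresh_rest.
  rewrite in_setU1 negb_or fresh_rest // andbT.
  by apply: contraNneq u_rest => <-.
- rewrite /S'; case: eqP => [->|_] //; apply: admissible_setU1 => //.
    exact: share_offer_le.
  by rewrite leNgt keep.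
- split=> // x x_R; rewrite !inE; have [-> | x_u] := eqVneq x u.
    have u_S' : u \in \bigcup_(i < ell) S' i.
      by apply/bigcupP; exists j; rewrite // /S' eqxx setU11.
    by rewrite u_S' orbT.
  move: (cover_rest x x_R x_u); rewrite !inE => /or3P[-> | /(subsetP cup_sub) -> | ->];
  by rewrite ?orbT.
Qed.

Lemma round_inv_foldl t (ustar E : {set N}) s rest : uniq rest ->
  round_inv t ustar E s rest -> round_inv t ustar E (foldl (step t) s rest) [::].
Proof.
elim: rest s => [|u rest IH] s //= uniq_rest inv.
by apply: IH; [case/andP: uniq_rest | apply: round_inv_step].
Qed.

Definition excluded (s : mstate R N ell) : {set N} := (\bigcup_(i < ell) mS s i) :|: mu s.

Lemma round_inv_start t (s : mstate R N ell) :
  round_inv t (mu s) (excluded s) (RState (mR s) (mp s) (mu s) (fun _ => set0) false)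
    [seq u <- ord | u \in mR s :\: excluded s].
Proof.
split=> //= [i x _ | i | _]; [by rewrite inE | exact: admissible_set0 |].
split=> // x x_R; rewrite inE mem_filter (perm_mem ord_enum) mem_enum andbT.
by rewrite in_setD x_R andbT in_setU; case: (x \in excluded s); rewrite ?orbT.
Qed.

Lemma round_inv_run t : exists r,
  run t.+1 = MState (rR r) (rp r) (ru r) (rS r) /\
  round_inv t.+1 (mu (run t)) (excluded (run t)) r [::].
Proof.
eexists; split; first reflexivity.
apply: round_inv_foldl (round_inv_start _ _).
by rewrite filter_uniq // (perm_uniq ord_enum) enum_uniq.
Qed.

Lemma run_admissible t i : admissible t (mp (run t)) (Sets t i).
Proof.
case: t => [|t]; first exact: admissible_set0.
by have [r [run_r [_ adm _ _]]] := round_inv_run t; rewrite /Sets run_r; apply: adm.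
Qed.

Lemma run_early_exit_or_stops t :
  early_exit t.+1 (mp (run t.+1)) (mu (run t.+1)) (Sets t.+1) \/
  mu (run t.+1) = mu (run t) /\ stops t.+1.
Proof.
have [r [run_r [_ _ early cov]]] := round_inv_run t.
rewrite /stops /Sets run_r /=.
case stopped: (rstop r); [left; exact: early | right].
have [-> cover] := cov (negbT stopped); split=> //.
rewrite big_split setD_eq0; apply/subsetP => x /cover.
by rewrite inE /excluded /= !in_setU => /or3P[] ->; rewrite ?orbT.
Qed.

Lemma value_le_rho t i : (1 - beta^-1) * v (Sets t i) <= rho t.
Proof.
have [bound share] := run_admissible t i.
exact: le_trans (onem_invf_mulr_le beta_gt0 share) bound.
Qed.

Lemma value_le_surplus t M i : (t <= M)%N ->
  (1 - beta^-1) * v (Sets t i) <= surplus (mp (run M)) (Sets t i).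
Proof.
move=> tM; have [_ share] := run_admissible t i.
exact: le_trans (onem_invf_mulr_le beta_gt0 share) (surplus_run_le _ tM).
Qed.

Section Output.
Variables (M : nat) (Sstar : {set N}).
Hypotheses (M_gt0 : (0 < M)%N) (runs_before_M : forall t, (0 < t < M)%N -> ~~ stops t)
  (Sstar_best : forall A, candidate M A -> util M A <= util M Sstar).

Local Notation U := (util M Sstar).

Lemma value_le_util t i : t = M.-1 \/ t = M -> (1 - beta^-1) * v (Sets t i) <= U.
Proof.
move=> tM; have t_le : (t <= M)%N by case: tM => ->; rewrite ?leq_pred.
apply: le_trans (value_le_surplus i t_le) (Sstar_best _).
by left; exists i; case: tM => ->; [left | right].
Qed.

Lemma util_ge0 (i : 'I_ell) : 0 <= U.
Proof.
apply: le_trans (value_le_util i (or_intror erefl)).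
by rewrite mulr_ge0 // ltW.
Qed.

Lemma early_exit_rho_le t : t = M.-1 \/ t = M ->
  early_exit t (mp (run t)) (mu (run M)) (Sets t) -> rho t <= 2 * U.
Proof.
move=> tM [u [j [mu_u uS exit]]].
have t_le : (t <= M)%N by case: tM => ->; rewrite ?leq_pred.
apply: ltW (lt_le_trans exit (le_trans (surplus_run_le _ t_le) _)).
apply: le_trans (surplus_setU1_le _ uS) _.
rewrite mulr_natl mulr2n lerD //; apply: Sstar_best; first by right.
by left; exists j; case: tM => ->; [left | right].
Qed.

Lemma rho_pred_le_util : (1 < M)%N -> rho M.-1 <= 2 * U.
Proof.
move=> M_gt1; have [m M_eq] : exists m, M = m.+2.
  by exists M.-2; case: (M) M_gt1 => [|[|]].
have := early_exit_rho_le; rewrite M_eq => exit_le.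
have [exit_M | [mu_M _]] := run_early_exit_or_stops m.+1.
  apply: le_trans (exit_le _ (or_intror erefl) exit_M).
  by rewrite (rhoS alpha eps m.+1) ler_peMl ?ltW.
have [exit_pred | [_ stops_pred]] := run_early_exit_or_stops m.
  by apply: exit_le; [left | rewrite mu_M].
by have := runs_before_M (t := m.+1); rewrite M_eq ltnSn stops_pred => /(_ isT).
Qed.

Lemma early_values_le_util i :
  (alpha - 1) * ((1 - beta^-1) * \sum_(0 <= t < M.-1) v (Sets t i)) <= 2 * U.
Proof.
have sum_le : (1 - beta^-1) * \sum_(0 <= t < M.-1) v (Sets t i)
    <= \sum_(0 <= t < M.-1) rho t.
  by rewrite mulr_sumr; apply: ler_sum => t _; apply: value_le_rho.
apply: le_trans (ler_wpM2l alpha_pred_ge0 sum_le) _; rewrite rho_telescope.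
have [M_gt1 | M_le1] := ltnP 1 M.
  by have := rho_pos 0; have := rho_pred_le_util M_gt1; lra.
have -> : M.-1 = 0%N by case: (M) M_le1 => [|[|]].
by rewrite subrr mulr_ge0 ?(util_ge0 i).
Qed.

Lemma sum_values_le_util i :
  (alpha - 1) * (1 - beta^-1) * \sum_(1 <= t < M.+1) v (Sets t i) <= 2 * alpha * U.
Proof.
rewrite sumr_nat1_last2 //.
have early := early_values_le_util i.
have last2 := ler_wpM2l alpha_pred_ge0 (value_le_util i (or_introl erefl)).
have last1 := ler_wpM2l alpha_pred_ge0 (value_le_util i (or_intror erefl)).
by move: early last2 last1; lra.
Qed.

End Output.
End Mechanism.

Theorem lemma4p7 (R : realFieldType) (N : finType) (ell : nat)
    (v : {set N} -> R) (c : N -> R) (B alpha beta eps : R) (ord : seq N)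
    (tb : nat -> N -> ('I_ell -> {set N}) -> 'I_ell)
    (M : nat) (Sstar : {set N}) :
  v set0 = 0 -> (forall A, 0 <= v A) -> submodular v ->
  (forall u, 0 <= c u) ->
  0 < B -> 1 < alpha -> 1 < beta -> 0 < eps ->
  ((ell == 1) || (ell == 2))%N ->
  perm_eq ord (enum N) ->
  (forall t u (S : 'I_ell -> {set N}) (i : 'I_ell),
      marg v u (S i) <= marg v u (S (tb t u S))) ->
  (0 < M)%N ->
  stops v c B alpha beta eps ord tb M ->
  (forall t, (0 < t < M)%N -> ~~ stops v c B alpha beta eps ord tb t) ->
  candidate v c B alpha beta eps ord tb M Sstar ->
  (forall A, candidate v c B alpha beta eps ord tb M A ->
     util v c B alpha beta eps ord tb M A <= util v c B alpha beta eps ord tb M Sstar) ->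
  \sum_(i < ell) \sum_(1 <= t < M.+1) v (Sets v c B alpha beta eps ord tb t i)
    <= (2 * ell%:R * alpha * util v c B alpha beta eps ord tb M Sstar)
       / ((alpha - 1) * (1 - beta^-1)).
Proof.
(* The bound holds for any number of candidate sets, any tie-breaking rule and
   whether or not round [M] stops: only the optimality of [Sstar] and the
   absence of an earlier stop are used. *)
move=> v0 v_ge0 v_submod c_ge0 B_gt0 alpha_gt1 beta_gt1 eps_gt0 _ ord_enum _
  M_gt0 _ runs_before_M _ Sstar_best.
set U := util _ _ _ _ _ _ _ _ M Sstar.
have bound i : (alpha - 1) * (1 - beta^-1) *
    \sum_(1 <= t < M.+1) v (Sets v c B alpha beta eps ord tb t i) <= 2 * alpha * U.
  exact: sum_values_le_util.
have denom_gt0 : 0 < (alpha - 1) * (1 - beta^-1).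
  by rewrite mulr_gt0 // subr_gt0 // invf_lt1 // (lt_trans ltr01).
rewrite ler_pdivlMr // mulr_suml.
apply: (@le_trans _ _ (\sum_(i < ell) 2 * alpha * U)).
  by apply: ler_sum => i _; rewrite mulrC; apply: bound.
by rewrite sumr_const card_ord -mulr_natl; lra.
Qed.
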